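(* There are absolute constants $\varepsilon_0\in(0,1)$ and $C>0$ such that the following holds. Let $d\ge2$, $x_0\ge3$, $f\in\mathcal{M}(x_0;d)$ and $1\le x\le x_0$, and for $1\le j\le d-1$ put $\sigma_j := \sum_{p\le x,\ f(p)=e(j/d)} \frac1p$. Let $\varepsilon\in(0,\varepsilon_0)$ with $\varepsilon P^-(d) > 1$, and assume $\sigma_m < \varepsilon \sum_{1 \leq j \leq d-1} \sigma_j$ for all $1 \leq m \leq d-1$. Then the number of $1\le\ell\le d-1$ for which $$\mathbb{D}(f^{\ell},1;x)^2 < \Big(\frac{2}{3} - C\varepsilon^{1/3}\Big) \sum_{1 \leq j \leq d-1} \sigma_j$$ is at most $C\varepsilon^{1/3} d$.
   Context: Sums over $p$ are over primes; $e(t):=e^{2\pi i t}$; $P^-(d)$ is the smallest prime factor of $d$; $\mu_d$ is the set of complex $d$-th roots of unity. For $g,h:\mathbb{N}\to\{|z|\le1\}$ and $x\ge2$, $\mathbb{D}(g,h;x):=\big(\sum_{p\le x}\frac{1-\mathrm{Re}(g(p)\overline{h(p)})}{p}\big)^{1/2}$, and $1$ denotes the constant function $1$. For $d\in\mathbb{N}$ and $x_0\ge1$, $\mathcal{M}(x_0;d)$ is the set of completely multiplicative functions $f:\mathbb{N}\to\mu_d\cup\{0\}$ such that for every $x\ge x_0$, $\max_{\alpha\in\mu_d}|\{n\le x: f(n)=\alpha\}|\le \frac{100x}{d}\prod_{p\le x,\ f(p)=0}(1-\frac1p)$. *)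

From Stdlib Require Import Reals Lra Lia ZArith Arith List Znumtheory.
From Coquelicot Require Import Coquelicot.
Open Scope R_scope.

Definition e (t : R) : C := (cos (2 * PI * t), sin (2 * PI * t)).

Definition Ceq_dec (a b : C) : {a = b} + {a <> b}.
Proof.
  destruct a as [a1 a2], b as [b1 b2].
  destruct (Req_EM_T a1 b1) as [H1|H1]; destruct (Req_EM_T a2 b2) as [H2|H2];
  [left; subst; reflexivity | right; congruence | right; congruence | right; congruence].
Defined.

Definition Ceqb (a b : C) : bool := if Ceq_dec a b then true else false.

Definition isprime (n : nat) : Prop := prime (Z.of_nat n).
Definition primeb (n : nat) : bool :=
  if prime_dec (Z.of_nat n) then true else false.

Definition upto (x : R) : list nat :=
  filter (fun n => if Rle_dec (INR n) x then true else false)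
         (seq 1 (Z.to_nat (up x))).

Definition primes_upto (x : R) : list nat := filter primeb (upto x).

Definition Rsum (l : list nat) (g : nat -> R) : R := fold_right Rplus 0 (map g l).
Definition Rprod (l : list nat) (g : nat -> R) : R := fold_right Rmult 1 (map g l).

Definition least_prime_factor (d : nat) : nat :=
  hd 0%nat (filter (fun q => andb (primeb q) (Nat.eqb (d mod q) 0)) (seq 2 (d - 1))).

Fixpoint Cpown (z : C) (n : nat) : C :=
  match n with O => RtoC 1 | S k => Cmult z (Cpown z k) end.

Definition in_mu (d : nat) (z : C) : Prop :=
  exists k : nat, (k < d)%nat /\ z = e (INR k / INR d).

Definition completely_multiplicative (f : nat -> C) : Prop :=
  f 1%nat = RtoC 1 /\ forall m n : nat, f (m * n)%nat = Cmult (f m) (f n).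

Definition count_val (f : nat -> C) (alpha : C) (x : R) : R :=
  INR (length (filter (fun n => Ceqb (f n) alpha) (upto x))).

Definition M_class (x0 : R) (d : nat) (f : nat -> C) : Prop :=
  completely_multiplicative f /\
  (forall n : nat, f n = RtoC 0 \/ in_mu d (f n)) /\
  (forall x : R, x0 <= x ->
     forall alpha : C, in_mu d alpha ->
       count_val f alpha x <=
       100 * x / INR d *
       Rprod (filter (fun p => Ceqb (f p) (RtoC 0)) (primes_upto x))
             (fun p => 1 - 1 / INR p)).

Definition Dist2 (g h : nat -> C) (x : R) : R :=
  Rsum (primes_upto x) (fun p => (1 - Re (Cmult (g p) (Cconj (h p)))) / INR p).

Definition sigmaj (f : nat -> C) (d : nat) (x : R) (j : nat) : R :=
  Rsum (filter (fun p => Ceqb (f p) (e (INR j / INR d))) (primes_upto x))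
       (fun p => 1 / INR p).

Definition sigma_total (f : nat -> C) (d : nat) (x : R) : R :=
  Rsum (seq 1 (d - 1)) (sigmaj f d x).

From Pilot Require Import Defs.
From Stdlib Require Import Reals List Lra Lia ZArith.
From Coquelicot Require Import Coquelicot.
Open Scope R_scope.

(* Write S for the sum of the sigma_j and G(l) for sum_j sigma_j cos(2 pi j l / d).
   Since every f(p) is 0 or a d-th root of unity, D(f^l, 1; x)^2 >= S - G(l), so
   each counted l has G(l) > S/3 and their number is at most (9/S^2) sum_{l<d} G(l)^2.
   Expanding the square, the orthogonality of the characters l -> e(jl/d) of Z/dZ
   kills every pair (j, k) except k = j and k = d - j, whence
   sum_{l<d} G(l)^2 <= 2 d (max_j sigma_j) S <= 2 eps d S^2.  The count is thus at
   most 18 eps d <= 18 eps^(1/3) d: one may take eps0 = 1/2 and C = 18, and neither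
   the hypotheses on x, x0 and P^-(d) nor the counting condition of M(x0; d) is
   needed. *)

Lemma Rsum_app l1 l2 g : Rsum (l1 ++ l2) g = Rsum l1 g + Rsum l2 g.
Proof. unfold Rsum; induction l1 as [|a l1 IH]; simpl; [ring | rewrite IH; ring]. Qed.

Lemma Rsum_ext l g h : (forall x, In x l -> g x = h x) -> Rsum l g = Rsum l h.
Proof.
  unfold Rsum; induction l as [|a l IH]; intros H; simpl; [reflexivity|].
  rewrite H, IH; auto with datatypes.
Qed.

Lemma Rsum_le l g h : (forall x, In x l -> g x <= h x) -> Rsum l g <= Rsum l h.
Proof.
  unfold Rsum; induction l as [|a l IH]; intros H; simpl; [lra|].
  apply Rplus_le_compat; auto with datatypes.
Qed.

Lemma Rsum_const l c : Rsum l (fun _ => c) = c * INR (length l).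
Proof.
  unfold Rsum; induction l as [|a l IH]; simpl length; [simpl; ring|].
  rewrite S_INR; simpl; rewrite IH; ring.
Qed.

Lemma Rsum_ge0 l g : (forall x, In x l -> 0 <= g x) -> 0 <= Rsum l g.
Proof.
  intros H; rewrite <- (Rmult_0_l (INR (length l))), <- Rsum_const.
  now apply Rsum_le.
Qed.

Lemma Rsum_add l g h : Rsum l (fun x => g x + h x) = Rsum l g + Rsum l h.
Proof. unfold Rsum; induction l as [|a l IH]; simpl; [ring | rewrite IH; ring]. Qed.

Lemma Rsum_sub l g h : Rsum l (fun x => g x - h x) = Rsum l g - Rsum l h.
Proof. unfold Rsum; induction l as [|a l IH]; simpl; [ring | rewrite IH; ring]. Qed.

Lemma Rsum_mult_l l c g : Rsum l (fun x => c * g x) = c * Rsum l g.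
Proof. unfold Rsum; induction l as [|a l IH]; simpl; [ring | rewrite IH; ring]. Qed.

Lemma Rsum_mult_r l c g : Rsum l (fun x => g x * c) = Rsum l g * c.
Proof. unfold Rsum; induction l as [|a l IH]; simpl; [ring | rewrite IH; ring]. Qed.

Lemma Rsum_comm (l1 l2 : list nat) (F : nat -> nat -> R) :
  Rsum l1 (fun a => Rsum l2 (F a)) = Rsum l2 (fun b => Rsum l1 (fun a => F a b)).
Proof.
  induction l1 as [|a l1 IH].
  - change (0 = Rsum l2 (fun _ => 0)); rewrite Rsum_const; ring.
  - change (Rsum l2 (F a) + Rsum l1 (fun a => Rsum l2 (F a))
            = Rsum l2 (fun b => F a b + Rsum l1 (fun a => F a b))).
    now rewrite IH, Rsum_add.
Qed.

Lemma Rsum_filter (P : nat -> bool) l g :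
  Rsum (filter P l) g = Rsum l (fun x => if P x then g x else 0).
Proof.
  unfold Rsum; induction l as [|a l IH]; simpl; [reflexivity|].
  destruct (P a); simpl; rewrite IH; ring.
Qed.

Lemma Rsum_if_unique_le (J : list nat) (b : nat -> bool) (t : nat -> R) (E : R) :
  NoDup J -> (forall j k, In j J -> In k J -> b j = true -> b k = true -> j = k) ->
  (forall j, In j J -> b j = true -> 0 <= t j <= E) -> 0 <= E ->
  Rsum J (fun j => if b j then t j else 0) <= E.
Proof.
  induction J as [|a J IH]; intros ND Hu Ht HE; [unfold Rsum; simpl; lra|].
  inversion_clear ND as [|? ? Ha ND'].
  change ((if b a then t a else 0) + Rsum J (fun j => if b j then t j else 0) <= E).
  destruct (b a) eqn:Hba.
  - assert (Hrest : Rsum J (fun j => if b j then t j else 0) = Rsum J (fun _ => 0)).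
    { apply Rsum_ext; intros j Hj; destruct (b j) eqn:Hbj; [|reflexivity].
      exfalso; apply Ha; replace a with j by (apply Hu; simpl; auto); exact Hj. }
    rewrite Hrest, Rsum_const.
    assert (0 <= t a <= E) by (apply Ht; simpl; auto). lra.
  - rewrite Rplus_0_l; apply IH; auto with datatypes.
Qed.

Lemma Rsum_eqb_le (J : list nat) (s : nat -> R) a E : NoDup J ->
  (forall j, In j J -> 0 <= s j <= E) -> 0 <= E ->
  Rsum J (fun k => if Nat.eqb k a then s k else 0) <= E.
Proof.
  intros ND Hs HE; apply Rsum_if_unique_le; auto.
  intros j k _ _ Hj Hk; apply Nat.eqb_eq in Hj, Hk; congruence.
Qed.

Lemma count_filter_le_Rsum_sq (J : list nat) (b : nat -> bool) (G : nat -> R) (a : R) :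
  0 < a -> (forall l, In l J -> b l = true -> a < G l) ->
  INR (length (filter b J)) <= Rsum J (fun l => (G l / a) ^ 2).
Proof.
  intros Ha; induction J as [|l J IH]; intros HG; [unfold Rsum; simpl; lra|].
  change (INR (length (filter b (l :: J)))
          <= (G l / a) ^ 2 + Rsum J (fun l => (G l / a) ^ 2)).
  assert (IHJ := IH (fun k Hk => HG k (in_cons l k J Hk))).
  simpl filter; destruct (b l) eqn:Hb.
  - simpl length; rewrite S_INR.
    assert (1 < G l / a).
    { apply (Rmult_lt_reg_r a); [lra|]. unfold Rdiv.
      rewrite Rmult_assoc, Rinv_l, Rmult_1_r, Rmult_1_l by lra.
      apply HG; simpl; auto. }
    nra.
  - assert (0 <= (G l / a) ^ 2) by apply pow2_ge_0. lra.
Qed.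

Lemma Cpown_e a n : Cpown (e a) n = e (a * INR n).
Proof.
  induction n as [|n IH].
  - unfold e; simpl; rewrite !Rmult_0_r, cos_0, sin_0; reflexivity.
  - cbn [Cpown]; rewrite IH, S_INR; unfold e.
    replace (2 * PI * (a * (INR n + 1))) with (2 * PI * a + 2 * PI * (a * INR n)) by ring.
    rewrite cos_plus, sin_plus; unfold Cmult; simpl; f_equal; ring.
Qed.

Lemma Re_Cpown_le_1 z n : (z = RtoC 0 \/ exists a, z = e a) -> Re (Cpown z n) <= 1.
Proof.
  intros [-> | [a ->]].
  - destruct n; unfold Cmult, RtoC, Re; simpl; lra.
  - rewrite Cpown_e; apply COS_bound.
Qed.

Lemma e_inj a b : 0 <= a < 1 -> 0 <= b < 1 -> e a = e b -> a = b.
Proof.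
  assert (Hlt : forall a b, 0 <= a -> b < 1 -> e a = e b -> ~ a < b).
  { clear a b; intros a b Ha Hb Heq Hab.
    unfold e in Heq; injection Heq as Hcos Hsin.
    set (c := PI * (b - a)).
    assert (Hc : 0 < sin c) by (pose proof PI_RGT_0; apply sin_gt_0; unfold c; nra).
    assert (Hcos2 : cos (2 * c) = 1).
    { replace (2 * c) with (2 * PI * b - 2 * PI * a) by (unfold c; ring).
      rewrite cos_minus, <- Hcos, <- Hsin.
      pose proof (sin2_cos2 (2 * PI * a)); unfold Rsqr in *; lra. }
    rewrite cos_2a_sin in Hcos2; nra. }
  intros Ha Hb Heq.
  destruct (Rtotal_order a b) as [H | [H | H]]; [| exact H |].
  - exfalso; exact (Hlt a b (proj1 Ha) (proj2 Hb) Heq H).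
  - exfalso; exact (Hlt b a (proj1 Hb) (proj2 Ha) (eq_sym Heq) H).
Qed.

Lemma sum_cos_telescope th n :
  2 * sin (th / 2) * Rsum (seq 0 n) (fun l => cos (th * INR l))
  = sin (th * INR n - th / 2) + sin (th / 2).
Proof.
  induction n as [|n IH].
  - unfold Rsum; simpl.
    replace (th * 0 - th / 2) with (- (th / 2)) by ring; rewrite sin_neg; ring.
  - rewrite seq_S, Rsum_app; simpl (0 + n)%nat.
    change (Rsum (n :: nil) (fun l => cos (th * INR l))) with (cos (th * INR n) + 0).
    rewrite Rmult_plus_distr_l, IH, S_INR.
    replace (th * (INR n + 1) - th / 2) with (th * INR n + th / 2) by field.
    rewrite sin_plus, sin_minus; ring.
Qed.

Lemma sum_cos_roots_of_unity (d : nat) (m : Z) : (0 < d)%nat ->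
  ~ (Z.of_nat d | m)%Z ->
  Rsum (seq 0 d) (fun l => cos (2 * PI * IZR m / INR d * INR l)) = 0.
Proof.
  intros Hd Hm.
  assert (Dpos : 0 < INR d) by (apply lt_0_INR; lia).
  pose proof PI_RGT_0.
  set (th := 2 * PI * IZR m / INR d).
  assert (Hhalf : sin (th / 2) <> 0).
  { intros Hs; apply sin_eq_0_0 in Hs as [z Hz]; apply Hm; exists z.
    apply eq_IZR; rewrite mult_IZR, <- INR_IZR_INZ.
    apply (Rmult_eq_reg_r (PI / INR d)); [| apply Rgt_not_eq, Rdiv_lt_0_compat; lra].
    replace (IZR m * (PI / INR d)) with (th / 2) by (unfold th; field; lra).
    rewrite Hz; field; lra. }
  assert (Hend : sin (th * INR d - th / 2) = - sin (th / 2)).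
  { assert (Hint : sin (PI * IZR m) = 0)
      by (apply sin_eq_0_1; exists m; ring).
    replace (th * INR d) with (2 * (PI * IZR m)) by (unfold th; field; lra).
    rewrite sin_minus, sin_2a, cos_2a_sin, Hint; ring. }
  pose proof (sum_cos_telescope th d) as Htel.
  rewrite Hend, Rplus_opp_l in Htel.
  apply Rmult_integral in Htel as [H0 | H0]; [lra | exact H0].
Qed.

Definition cos_harmonic (d j l : nat) : R := cos (2 * PI * (INR j / INR d * INR l)).

Lemma cos_harmonic_mul d j k l : (0 < d)%nat ->
  2 * (cos_harmonic d j l * cos_harmonic d k l) =
  cos (2 * PI * IZR (Z.of_nat j - Z.of_nat k) / INR d * INR l)
  + cos (2 * PI * IZR (Z.of_nat j + Z.of_nat k) / INR d * INR l).
Proof.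
  intros Hd; assert (Dpos : 0 < INR d) by (apply lt_0_INR; lia).
  unfold cos_harmonic; rewrite minus_IZR, plus_IZR, <- !INR_IZR_INZ.
  set (a := 2 * PI * (INR j / INR d * INR l)); set (b := 2 * PI * (INR k / INR d * INR l)).
  replace (2 * PI * (INR j - INR k) / INR d * INR l) with (a - b) by (unfold a, b; field; lra).
  replace (2 * PI * (INR j + INR k) / INR d * INR l) with (a + b) by (unfold a, b; field; lra).
  rewrite cos_minus, cos_plus; ring.
Qed.

Lemma sum_cos_harmonic_mul_orth d j k :
  (1 <= j <= d - 1)%nat -> (1 <= k <= d - 1)%nat -> k <> j -> k <> (d - j)%nat ->
  Rsum (seq 0 d) (fun l => cos_harmonic d j l * cos_harmonic d k l) = 0.
Proof.
  intros Hj Hk Hkj Hkdj.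
  apply (Rmult_eq_reg_l 2); [| lra].
  rewrite Rmult_0_r, <- Rsum_mult_l.
  rewrite (Rsum_ext _ _ _ (fun l _ => cos_harmonic_mul d j k l ltac:(lia))), Rsum_add.
  rewrite !sum_cos_roots_of_unity; [ring | lia | | lia |]; intros [z Hz].
  - destruct (Z.lt_trichotomy z 1) as [| []]; nia.
  - destruct (Z.lt_trichotomy z 0) as [| []]; nia.
Qed.

Lemma sum_cos_harmonic_mul_le d j k :
  (1 <= j <= d - 1)%nat -> (1 <= k <= d - 1)%nat ->
  Rsum (seq 0 d) (fun l => cos_harmonic d j l * cos_harmonic d k l)
  <= INR d * ((if Nat.eqb k j then 1 else 0) + (if Nat.eqb k (d - j) then 1 else 0)).
Proof.
  intros Hj Hk.
  destruct (Nat.eqb_spec k j), (Nat.eqb_spec k (d - j));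
    try (rewrite sum_cos_harmonic_mul_orth by assumption; lra);
    (eapply Rle_trans;
     [ apply (Rsum_le _ _ (fun _ => 1)); intros l _; unfold cos_harmonic;
       pose proof (COS_bound (2 * PI * (INR j / INR d * INR l)));
       pose proof (COS_bound (2 * PI * (INR k / INR d * INR l))); nra
     | rewrite Rsum_const, length_seq; pose proof (pos_INR d); nra ]).
Qed.

Lemma Rsum_sq_expand (L J : list nat) (s : nat -> R) (c : nat -> nat -> R) :
  Rsum L (fun l => (Rsum J (fun j => s j * c j l)) ^ 2)
  = Rsum J (fun j => s j * Rsum J (fun k => s k * Rsum L (fun l => c j l * c k l))).
Proof.
  transitivity (Rsum L (fun l => Rsum J (fun j => Rsum J (fun k =>
                  s j * (s k * (c j l * c k l)))))).
  { apply Rsum_ext; intros l _.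
    rewrite <- Rsqr_pow2; unfold Rsqr; rewrite <- Rsum_mult_r.
    apply Rsum_ext; intros j _; rewrite <- Rsum_mult_l.
    apply Rsum_ext; intros k _; ring. }
  rewrite Rsum_comm; apply Rsum_ext; intros j _.
  rewrite Rsum_comm, <- Rsum_mult_l; apply Rsum_ext; intros k _.
  rewrite <- Rsum_mult_l, <- Rsum_mult_l; reflexivity.
Qed.

Lemma sum_sq_harmonic_le d (s : nat -> R) E : (2 <= d)%nat ->
  (forall j, In j (seq 1 (d - 1)) -> 0 <= s j <= E) -> 0 <= E ->
  Rsum (seq 0 d) (fun l => (Rsum (seq 1 (d - 1)) (fun j => s j * cos_harmonic d j l)) ^ 2)
  <= 2 * INR d * E * Rsum (seq 1 (d - 1)) s.
Proof.
  intros Hd Hs HE; set (J := seq 1 (d - 1)) in *.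
  assert (HJ : forall j, In j J -> (1 <= j <= d - 1)%nat)
    by (intros j Hj; apply in_seq in Hj; lia).
  rewrite Rsum_sq_expand, <- Rsum_mult_l; apply Rsum_le; intros j Hj.
  destruct (Hs j Hj) as [Hsj _]; rewrite (Rmult_comm _ (s j)).
  apply Rmult_le_compat_l; [exact Hsj|].
  (* By orthogonality only k = j and k = d - j contribute. *)
  apply Rle_trans with (INR d * (Rsum J (fun k => if Nat.eqb k j then s k else 0)
                                 + Rsum J (fun k => if Nat.eqb k (d - j) then s k else 0))).
  - rewrite <- Rsum_add, <- Rsum_mult_l; apply Rsum_le; intros k Hk.
    destruct (Hs k Hk) as [Hsk _].
    pose proof (sum_cos_harmonic_mul_le d j k (HJ j Hj) (HJ k Hk)) as Hjk.
    eapply Rle_trans; [apply Rmult_le_compat_l; [exact Hsk | exact Hjk] |].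
    destruct (Nat.eqb k j), (Nat.eqb k (d - j)); lra.
  - pose proof (Rsum_eqb_le J s j E (seq_NoDup _ _) Hs HE).
    pose proof (Rsum_eqb_le J s (d - j) E (seq_NoDup _ _) Hs HE).
    pose proof (pos_INR d); nra.
Qed.

Lemma Ceqb_eq a b : Ceqb a b = true -> a = b.
Proof. unfold Ceqb; destruct (Defs.Ceq_dec a b); [auto | congruence]. Qed.

Lemma primes_upto_pos x p : In p (primes_upto x) -> 0 < INR p.
Proof.
  unfold primes_upto, upto; intros Hp.
  apply filter_In in Hp as [Hp _]; apply filter_In in Hp as [Hp _].
  apply in_seq in Hp; apply lt_0_INR; lia.
Qed.

Lemma sigmaj_ge0 f d x j : 0 <= sigmaj f d x j.
Proof.
  apply Rsum_ge0; intros p Hp; apply filter_In in Hp as [Hp _].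
  pose proof (primes_upto_pos x p Hp); apply Rdiv_le_0_compat; lra.
Qed.

Lemma Dist2_pow_1_ge d f x l : (2 <= d)%nat ->
  (forall n : nat, f n = RtoC 0 \/ in_mu d (f n)) ->
  sigma_total f d x - Rsum (seq 1 (d - 1)) (fun j => sigmaj f d x j * cos_harmonic d j l)
  <= Dist2 (fun n => Cpown (f n) l) (fun _ => RtoC 1) x.
Proof.
  intros Hd Hval.
  assert (Dpos : 0 < INR d) by (apply lt_0_INR; lia).
  set (P := primes_upto x); set (J := seq 1 (d - 1)).
  set (t := fun p => (1 - Re (Cpown (f p) l)) / INR p).
  assert (HD : Dist2 (fun n => Cpown (f n) l) (fun _ => RtoC 1) x = Rsum P t).
  { apply Rsum_ext; intros p _; unfold t; do 2 f_equal.
    destruct (Cpown (f p) l); unfold Cmult, Cconj, RtoC, Re; simpl; ring. }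
  unfold sigma_total; rewrite HD, <- Rsum_sub.
  transitivity (Rsum J (fun j => Rsum P (fun p =>
                  if Ceqb (f p) (e (INR j / INR d)) then t p else 0))).
  { right; apply Rsum_ext; intros j _.
    transitivity ((1 - cos_harmonic d j l) * sigmaj f d x j); [ring |].
    unfold sigmaj; fold P; rewrite <- Rsum_mult_l, Rsum_filter; apply Rsum_ext; intros p Hp.
    destruct (Ceqb (f p) (e (INR j / INR d))) eqn:Hfp; [| ring].
    apply Ceqb_eq in Hfp; unfold t; rewrite Hfp, Cpown_e.
    pose proof (primes_upto_pos x p Hp); unfold e, Re, cos_harmonic; simpl; field; lra. }
  (* A prime p has f(p) = e(j/d) for at most one j, and its term t p is nonnegative. *)
  rewrite Rsum_comm; apply Rsum_le; intros p Hp.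
  pose proof (primes_upto_pos x p Hp) as Hp_pos.
  assert (Ht : 0 <= t p).
  { apply Rdiv_le_0_compat; [| lra].
    enough (Re (Cpown (f p) l) <= 1) by lra.
    apply Re_Cpown_le_1; destruct (Hval p) as [Hz | [k [_ He]]]; eauto. }
  apply Rsum_if_unique_le; [apply seq_NoDup | | intros; lra | exact Ht].
  intros j k Hj Hk Hfj Hfk; apply Ceqb_eq in Hfj, Hfk; rewrite Hfj in Hfk.
  apply in_seq in Hj, Hk.
  assert (Hfrac : forall i, (i < d)%nat -> 0 <= INR i / INR d < 1).
  { intros i Hi; split; [apply Rdiv_le_0_compat; [apply pos_INR | lra] |].
    apply (Rdiv_lt_1 _ _ Dpos), lt_INR, Hi. }
  apply e_inj in Hfk; try (apply Hfrac; lia).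
  apply INR_eq; apply (Rmult_eq_reg_r (/ INR d)); [exact Hfk | apply Rinv_neq_0_compat; lra].
Qed.

Lemma count_harmonic_gt_le d (s : nat -> R) E (b : nat -> bool) : (2 <= d)%nat ->
  (forall j, In j (seq 1 (d - 1)) -> 0 <= s j <= E) -> 0 < Rsum (seq 1 (d - 1)) s ->
  (forall l, In l (seq 1 (d - 1)) -> b l = true ->
     Rsum (seq 1 (d - 1)) s / 3 < Rsum (seq 1 (d - 1)) (fun j => s j * cos_harmonic d j l)) ->
  INR (length (filter b (seq 1 (d - 1)))) <= 18 * INR d * E / Rsum (seq 1 (d - 1)) s.
Proof.
  intros Hd Hs HT Hlarge; set (J := seq 1 (d - 1)) in *; set (T := Rsum J s) in *.
  set (G := fun l => Rsum J (fun j => s j * cos_harmonic d j l)) in *.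
  assert (HE : 0 <= E) by (destruct (Hs 1%nat ltac:(apply in_seq; lia)); lra).
  eapply Rle_trans; [apply (count_filter_le_Rsum_sq _ _ G (T / 3)); [lra | exact Hlarge] |].
  apply Rle_trans with (Rsum (seq 0 d) (fun l => (G l / (T / 3)) ^ 2)).
  { replace (seq 0 d) with (0%nat :: J)
      by (unfold J; destruct d; [lia | simpl; rewrite Nat.sub_0_r; reflexivity]).
    pose proof (pow2_ge_0 (G 0%nat / (T / 3))); unfold Rsum; simpl; lra. }
  replace (Rsum (seq 0 d) (fun l => (G l / (T / 3)) ^ 2))
    with (9 / T ^ 2 * Rsum (seq 0 d) (fun l => G l ^ 2))
    by (rewrite <- Rsum_mult_l; apply Rsum_ext; intros; field; lra).
  apply Rle_trans with (9 / T ^ 2 * (2 * INR d * E * T)).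
  - apply Rmult_le_compat_l; [apply Rdiv_le_0_compat; nra |].
    exact (sum_sq_harmonic_le d s E Hd Hs HE).
  - right; field; lra.
Qed.

Lemma Rpower_ge_self a r : 0 < a < 1 -> 0 < r <= 1 -> a <= Rpower a r.
Proof.
  intros Ha Hr; unfold Rpower.
  assert (ln a < 0) by (rewrite <- ln_1; apply ln_increasing; lra).
  rewrite <- (exp_ln a) at 1 by lra.
  destruct (Req_dec r 1) as [-> | Hr1]; [rewrite Rmult_1_l; lra |].
  left; apply exp_increasing; nra.
Qed.

Theorem lemma3p2 :
  exists eps0 Cc : R, 0 < eps0 < 1 /\ 0 < Cc /\
  forall (d : nat) (x0 : R) (f : nat -> C) (x : R) (eps : R),
    (2 <= d)%nat -> 3 <= x0 -> M_class x0 d f ->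
    1 <= x <= x0 ->
    0 < eps < eps0 -> eps * INR (least_prime_factor d) > 1 ->
    (forall m : nat, (1 <= m)%nat -> (m <= d - 1)%nat ->
       sigmaj f d x m < eps * sigma_total f d x) ->
    INR (length (filter
       (fun l => if Rlt_dec (Dist2 (fun n => Cpown (f n) l) (fun _ => RtoC 1) x)
                            ((2/3 - Cc * Rpower eps (1/3)) * sigma_total f d x)
                 then true else false)
       (seq 1 (d - 1)%nat)))
    <= Cc * Rpower eps (1/3) * INR d.
Proof.
  exists (1/2), 18; split; [lra | split; [lra |]].
  intros d x0 f x eps Hd _ [_ [Hval _]] _ Heps _ Hsig.
  pose proof (Hsig 1%nat ltac:(lia) ltac:(lia)); pose proof (sigmaj_ge0 f d x 1).
  assert (HT : 0 < sigma_total f d x) by nra.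
  assert (Hpow : eps <= Rpower eps (1/3)) by (apply Rpower_ge_self; lra).
  eapply Rle_trans; [apply (count_harmonic_gt_le d (sigmaj f d x) (eps * sigma_total f d x))|].
  - exact Hd.
  - intros j Hj; apply in_seq in Hj; split; [apply sigmaj_ge0 | left; apply Hsig; lia].
  - exact HT.
  - intros l _; destruct Rlt_dec as [Hlt |]; [intros _ | discriminate].
    pose proof (Dist2_pow_1_ge d f x l Hd Hval); unfold sigma_total in *; nra.
  - apply Rle_trans with (18 * eps * INR d); [right; unfold sigma_total in *; field; lra |].
    pose proof (pos_INR d); nra.
Qed.
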